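(* Let $\mathcal{X}\in\mathbb{C}^{n_1\times\cdots\times n_d}$, let $\mathcal{L}$ be an $r$-dimensional subspace of $\mathbb{C}^{n_1\times\cdots\times n_d}$ spanned by orthonormal tensors $\{\mathcal{T}_k\}_{k\in[r]}$, and let $\mathbb{P}_{\mathcal{L}^\perp}$ be the orthogonal projection onto the orthogonal complement of $\mathcal{L}$. Fix $\epsilon\in(0,1)$ and suppose a linear operator $L:\mathbb{C}^{n_1\times\cdots\times n_d}\to\mathbb{C}^{m_1\times\cdots\times m_{d'}}$ satisfies: (i) $L$ is an $(\epsilon/6)$-JL embedding of all $\mathcal{Y}\in\mathcal{L}\cup\{\mathbb{P}_{\mathcal{L}^\perp}(\mathcal{X})\}$; (ii) $L$ is an $(\epsilon/24\sqrt{r})$-JL embedding of the $4r$ tensors $$\mathcal{S}':=\bigcup_{k\in[r]}\Big\{\mathcal{P}-\mathcal{T}_k,\ \mathcal{P}+\mathcal{T}_k,\ \mathcal{P}-\mathrm{i}\,\mathcal{T}_k,\ \mathcal{P}+\mathrm{i}\,\mathcal{T}_k\Big\},\qquad \mathcal{P}:=\frac{\mathbb{P}_{\mathcal{L}^\perp}(\mathcal{X})}{\|\mathbb{P}_{\mathcal{L}^\perp}(\mathcal{X})\|}.$$ Let $\mathrm{vect}:\mathbb{C}^{m_1\times\cdots\times m_{d'}}\to\mathbb{C}^{\prod_{\ell=1}^{d'}m_\ell}$ be a reshaping vectorization operator and let $\mathbf{A}\in\mathbb{C}^{m\times\prod_{\ell}m_\ell}$ be an $(\epsilon/3)$-JL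 embedding into $\mathbb{C}^m$ of (every vector in) the subspace $$\mathcal{L}':=\mathrm{span}\{\mathrm{vect}(L(\mathbb{P}_{\mathcal{L}^\perp}(\mathcal{X}))),\mathrm{vect}(L(\mathcal{T}_1)),\dots,\mathrm{vect}(L(\mathcal{T}_r))\}.$$ Then $$\big|\|\mathbf{A}(\mathrm{vect}(L(\mathcal{X}-\mathcal{Y})))\|_2^2-\|\mathcal{X}-\mathcal{Y}\|^2\big|\le\epsilon\|\mathcal{X}-\mathcal{Y}\|^2\quad\text{for all }\mathcal{Y}\in\mathcal{L}.$$
   Context: Tensors carry the inner product $\langle\mathcal{X},\mathcal{Y}\rangle=\sum\mathcal{X}_{i_1\dots i_d}\overline{\mathcal{Y}_{i_1\dots i_d}}$ and norm $\|\cdot\|$; $\mathrm{i}$ is the imaginary unit. A linear map $L$ is an $\epsilon$-JL embedding of a set $S$ if $\|L(x)\|^2=(1+\epsilon_x)\|x\|^2$ with $\epsilon_x\in(-\epsilon,\epsilon)$ for every $x\in S$. *)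

From mathcomp Require Import all_boot all_order all_algebra all_reals.
From mathcomp Require Export complex.
Set Implicit Arguments. Unset Strict Implicit. Unset Printing Implicit Defensive.
Import Order.TTheory GRing.Theory Num.Theory.
Local Open Scope ring_scope.
Local Open Scope complex_scope.

Section Defs.
Variable R : realType.
Local Notation C := R[i].

Definition tindex (d : nat) (n : 'I_d -> nat) : finType :=
  {dffun forall l : 'I_d, 'I_(n l)}.

Definition tensor (d : nat) (n : 'I_d -> nat) := {ffun tindex n -> C}.

Definition tdot (I : finType) (X Y : {ffun I -> C}) : C :=
  \sum_i X i * (Y i)^*.

(* squared norm ||X||^2 (a nonnegative real, stored in C) *)
Definition tnorm2 (I : finType) (X : {ffun I -> C}) : C := \sum_i `|X i| ^+ 2.

Definition tnorm (I : finType) (X : {ffun I -> C}) : C := sqrtC (tnorm2 X).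

Definition vnorm2 (M : nat) (v : 'cV[C]_M) : C := \sum_i `|v i 0| ^+ 2.

(* eps-JL embedding of a set S, with respect to given squared norms *)
Definition JL_embedding (V W : Type) (nV : V -> C) (nW : W -> C)
    (f : V -> W) (eps : R) (S : V -> Prop) : Prop :=
  forall x, S x -> exists e : R, - eps < e < eps /\ nW (f x) = (1 + e%:C) * nV x.

Definition orthonormal_fam (I : finType) (r : nat) (T : 'I_r -> {ffun I -> C}) :=
  forall k l : 'I_r, tdot (T k) (T l) = (k == l)%:R.

Definition span_of (V : lmodType C) (r : nat) (T : 'I_r -> V) : V -> Prop :=
  fun Y => exists c : 'I_r -> C, Y = \sum_k c k *: T k.

Definition span_of1 (V : lmodType C) (r : nat) (w0 : V) (w : 'I_r -> V) : V -> Prop :=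
  fun v => exists (c0 : C) (c : 'I_r -> C), v = c0 *: w0 + \sum_k c k *: w k.

(* orthogonal projection onto the orthogonal complement of span T, T orthonormal *)
Definition proj_perp (I : finType) (r : nat) (T : 'I_r -> {ffun I -> C})
    (X : {ffun I -> C}) : {ffun I -> C} :=
  X - \sum_k tdot X (T k) *: T k.

(* reshaping vectorization given by a bijection e of the index sets *)
Definition vect (J : finType) (M : nat) (e : 'I_M -> J) (Z : {ffun J -> C}) : 'cV[C]_M :=
  \col_k Z (e k).

Definition Sprime (I : finType) (r : nat) (T : 'I_r -> {ffun I -> C})
    (X : {ffun I -> C}) : {ffun I -> C} -> Prop :=
  let P := (tnorm (proj_perp T X))^-1 *: proj_perp T X in
  fun Z => exists k : 'I_r,
    Z = P - T k \/ Z = P + T k \/ Z = P - 'i *: T k \/ Z = P + 'i *: T k.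

End Defs.

(* Write X - Y = z + w with z = P_{L^perp}(X) and w = sum_k a_k T_k in L, so that
   ||X - Y||^2 = ||z||^2 + ||w||^2 and
   ||L(z + w)||^2 = ||Lz||^2 + ||Lw||^2 + 2 Re <Lz, Lw>.
   By (i) the first two terms are accurate up to eps/6.  For the cross term, P = z/||z||
   and T_k are orthonormal, so the four tensors P +- T_k, P +- i T_k of S' all have
   squared norm 2 and, by polarization, (ii) gives |<LP, LT_k>| <= 2 delta with
   delta = eps/(24 sqrt r).  Hence |<Lz, Lw>| <= 2 delta ||z|| sum_k |a_k|, which is at
   most (eps/24)(||z||^2 + ||w||^2) by AM-GM.  So L distorts ||X - Y||^2 by at most eps/4;
   since vect(L(X - Y)) lies in L', A adds a factor 1 + eps/3, and
   (1 + eps/3)(1 + eps/4) - 1 <= eps. *)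

From HB Require Import structures.
From mathcomp Require Import all_boot all_order all_algebra all_reals.
From mathcomp Require Import complex.
From mathcomp Require Import ring lra.
Import Order.TTheory GRing.Theory Num.Theory.
Local Open Scope ring_scope.
Local Open Scope complex_scope.
Set Implicit Arguments. Unset Strict Implicit. Unset Printing Implicit Defensive.

Section InnerProduct.
Variables (R : realType) (I : finType).
Local Notation C := R[i].
Implicit Types (a b : C) (X Y Z : {ffun I -> C}).

Lemma tdotC X Y : tdot Y X = (tdot X Y)^*.
Proof.
rewrite /tdot rmorph_sum; apply: eq_bigr => i _.
by rewrite rmorphM /= conjcK mulrC.
Qed.

Lemma tdotDl X Y Z : tdot (X + Y) Z = tdot X Z + tdot Y Z.
Proof. by rewrite /tdot -big_split; apply: eq_bigr => i _; rewrite ffunE mulrDl. Qed.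

Lemma tdotZl a X Y : tdot (a *: X) Y = a * tdot X Y.
Proof. by rewrite /tdot mulr_sumr; apply: eq_bigr => i _; rewrite ffunE mulrA. Qed.

Lemma tdotDr X Y Z : tdot X (Y + Z) = tdot X Y + tdot X Z.
Proof. by rewrite tdotC tdotDl rmorphD /= -!tdotC. Qed.

Lemma tdotZr a X Y : tdot X (a *: Y) = a^* * tdot X Y.
Proof. by rewrite tdotC tdotZl rmorphM /= -tdotC. Qed.

Lemma tdotNr X Y : tdot X (- Y) = - tdot X Y.
Proof. by rewrite -scaleN1r tdotZr rmorphN rmorph1 mulN1r. Qed.

Lemma tdotNl X Y : tdot (- X) Y = - tdot X Y.
Proof. by rewrite -scaleN1r tdotZl mulN1r. Qed.

Lemma tdotBl X Y Z : tdot (X - Y) Z = tdot X Z - tdot Y Z.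
Proof. by rewrite tdotDl tdotNl. Qed.

Lemma tdot0l Y : tdot 0 Y = 0.
Proof. by rewrite -(scale0r 0) tdotZl mul0r. Qed.

Lemma tdot_suml (r : nat) (F : 'I_r -> {ffun I -> C}) Y :
  tdot (\sum_k F k) Y = \sum_k tdot (F k) Y.
Proof. by elim/big_rec2: _ => [|k s t _ <-]; rewrite ?tdot0l ?tdotDl. Qed.

Lemma tdot_sumr (r : nat) (F : 'I_r -> {ffun I -> C}) Y :
  tdot Y (\sum_k F k) = \sum_k tdot Y (F k).
Proof.
by rewrite tdotC tdot_suml rmorph_sum; apply: eq_bigr => k _ /=; rewrite -tdotC.
Qed.

Lemma tnorm2E X : tnorm2 X = tdot X X.
Proof. by apply: eq_bigr => i _; rewrite sqr_normc. Qed.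

Lemma tnorm2_ge0 X : 0 <= tnorm2 X.
Proof. by apply: sumr_ge0 => i _; rewrite exprn_ge0. Qed.

Lemma tnorm2_eq0 X : tnorm2 X = 0 -> X = 0.
Proof.
move=> /eqP; rewrite psumr_eq0 => [/allP X0|i _]; last exact: exprn_ge0.
apply/ffunP => i; rewrite ffunE; apply/eqP.
by have := X0 i (mem_index_enum i); rewrite expf_eq0 normr_eq0.
Qed.

Lemma tnorm2D X Y :
  tnorm2 (X + Y) = tnorm2 X + tnorm2 Y + (tdot X Y + (tdot X Y)^*).
Proof. rewrite !tnorm2E tdotDl !tdotDr (tdotC X Y). ring. Qed.

Lemma tnorm2Z a X : tnorm2 (a *: X) = `|a| ^+ 2 * tnorm2 X.
Proof. by rewrite !tnorm2E tdotZl tdotZr mulrA sqr_normc. Qed.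

Lemma tnorm2D_orthogonal X Y : tdot X Y = 0 -> tnorm2 (X + Y) = tnorm2 X + tnorm2 Y.
Proof. by move=> XY; rewrite tnorm2D XY rmorph0 !addr0. Qed.

Lemma tnorm2_unimodular_sum X Y b :
  tnorm2 X = 1 -> tnorm2 Y = 1 -> tdot X Y = 0 -> `|b| = 1 ->
  tnorm2 (X + b *: Y) = 2.
Proof.
move=> X1 Y1 XY b1.
by rewrite tnorm2D_orthogonal ?tdotZr ?XY ?mulr0 // tnorm2Z b1 X1 Y1 expr1n mul1r.
Qed.

Lemma tdot_polarization X Y :
  4 * tdot X Y = tnorm2 (X + Y) - tnorm2 (X - Y)
                 + 'i * tnorm2 (X + 'i *: Y) - 'i * tnorm2 (X - 'i *: Y).
Proof.
rewrite !tnorm2D !tnorm2E !tdotNl !tdotNr !tdotZl !tdotZr.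
move: (tdot X Y) (tdot X X) (tdot Y Y) => [a b] [c d] [e f].
by apply/eqP; rewrite eq_complex /=; apply/andP; split; apply/eqP; ring.
Qed.

End InnerProduct.

Section OrthogonalProjection.
Variables (R : realType) (I : finType) (r : nat) (T : 'I_r -> {ffun I -> R[i]}).
Hypothesis hT : orthonormal_fam T.
Implicit Types (X : {ffun I -> R[i]}) (a : 'I_r -> R[i]).

Lemma tnorm2_orthonormal k : tnorm2 (T k) = 1.
Proof. by rewrite tnorm2E hT eqxx. Qed.

Lemma tdot_proj_perp X l : tdot (proj_perp T X) (T l) = 0.
Proof.
rewrite tdotBl tdot_suml (bigD1 l) //= tdotZl hT eqxx mulr1 big1 ?addr0 ?subrr //.
by move=> k /negbTE kl; rewrite tdotZl hT kl mulr0.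
Qed.

Lemma tdot_proj_perp_span X a : tdot (proj_perp T X) (\sum_k a k *: T k) = 0.
Proof. by rewrite tdot_sumr big1 // => k _; rewrite tdotZr tdot_proj_perp mulr0. Qed.

Lemma tnorm2_span a : tnorm2 (\sum_k a k *: T k) = \sum_k `|a k| ^+ 2.
Proof.
rewrite tnorm2E tdot_suml; apply: eq_bigr => k _.
rewrite tdotZl tdot_sumr (bigD1 k) //= tdotZr hT eqxx mulr1 big1 ?addr0.
  by rewrite sqr_normc.
by move=> l /negbTE lk; rewrite tdotZr hT eq_sym lk mulr0.
Qed.

End OrthogonalProjection.

Lemma sub_span_proj_perp (R : realType) (I : finType) (r : nat)
    (T : 'I_r -> {ffun I -> R[i]}) X (c : 'I_r -> R[i]) :
  X - \sum_k c k *: T k = proj_perp T X + \sum_k (tdot X (T k) - c k) *: T k.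
Proof.
have -> : \sum_k (tdot X (T k) - c k) *: T k
          = \sum_k tdot X (T k) *: T k - \sum_k c k *: T k.
  by rewrite -sumrB; apply: eq_bigr => k _; rewrite scalerBl.
by rewrite /proj_perp addrA subrK.
Qed.

Section Vectorization.
Variables (R : realType) (J : finType) (M : nat) (e : 'I_M -> J).

Fact vect_is_semilinear : semilinear (@vect R J M e).
Proof. by split=> [a U|U V]; apply/matrixP => i j; rewrite !mxE ffunE. Qed.
HB.instance Definition _ :=
  GRing.isSemilinear.Build R[i] {ffun J -> R[i]} 'cV[R[i]]_M _ (@vect R J M e)
    vect_is_semilinear.

Lemma vnorm2_vect :
  bijective e -> forall U : {ffun J -> R[i]}, vnorm2 (vect e U) = tnorm2 U.
Proof.
move=> e_bij U; rewrite /vnorm2 /tnorm2 (reindex e); last exact: onW_bij.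
by apply: eq_bigr => i _; rewrite mxE.
Qed.

End Vectorization.

Lemma JL_embeddingS (R : realType) (V W : Type) (nV : V -> R[i]) (nW : W -> R[i])
    (f : V -> W) (eps : R) (S S' : V -> Prop) :
  (forall x, S' x -> S x) -> JL_embedding nV nW f eps S -> JL_embedding nV nW f eps S'.
Proof. by move=> S'S fS x /S'S /fS. Qed.

Lemma normc_real (R : realType) (x : R) : `|x%:C| = `|x|%:C.
Proof. by rewrite normc_def /= expr0n /= addr0 sqrtr_sqr. Qed.

Lemma mean_sqr_sum_le (K : numFieldType) (r : nat) (q s : K) (x : 'I_r -> K) :
  0 <= q -> q ^+ 2 = r%:R -> s \is Num.real -> (forall k, x k \is Num.real) ->
  2 * (s / q) * \sum_k x k <= s ^+ 2 + \sum_k x k ^+ 2.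
Proof.
move=> q_ge0 q2 s_real x_real.
(* For r = 0 the junk value s / 0 = 0 makes the left-hand side vanish. *)
have [->|q_neq0] := eqVneq q 0.
  rewrite invr0 mulr0 mulr0 mul0r addr_ge0 ?real_exprn_even_ge0 //.
  by apply: sumr_ge0 => k _; rewrite real_exprn_even_ge0.
have sq_real : s / q \is Num.real by rewrite rpredM // rpredV ger0_real.
have -> : s ^+ 2 = \sum_(k < r) (s / q) ^+ 2.
  by rewrite sumr_const card_ord -mulr_natr -q2 expr_div_n divfK ?expf_neq0.
rewrite mulr_sumr -big_split /=; apply: ler_sum => k _.
by rewrite -mulrA mulr_natl; exact: (real_leif_mean_square_scaled sq_real (x_real k)).1.
Qed.

Section JLInnerProducts.
Variables (R : realType) (I J : finType).
Variable L : {linear {ffun I -> R[i]} -> {ffun J -> R[i]}}.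
Local Notation JL := (JL_embedding (@tnorm2 R _) (@tnorm2 R _) L).

Lemma JL_tdot_orthonormal_le (del : R) (P Q : {ffun I -> R[i]}) :
  tnorm2 P = 1 -> tnorm2 Q = 1 -> tdot P Q = 0 ->
  JL del (fun Z => Z = P - Q \/ Z = P + Q \/ Z = P - 'i *: Q \/ Z = P + 'i *: Q) ->
  `|tdot (L P) (L Q)| <= (2 * del)%:C.
Proof.
move=> P1 Q1 PQ hL.
have PbQ b : `|b| = 1 -> tnorm2 (P + b *: Q) = 2 := tnorm2_unimodular_sum P1 Q1 PQ.
have n1 : tnorm2 (P + Q) = 2 by have := PbQ 1; rewrite normr1 scale1r; apply.
have n2 : tnorm2 (P - Q) = 2 by have := PbQ (-1); rewrite normrN normr1 scaleN1r; apply.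
have n3 : tnorm2 (P + 'i *: Q) = 2 by apply: PbQ; exact: normCi.
have n4 : tnorm2 (P - 'i *: Q) = 2 by have := PbQ (- 'i); rewrite normrN normCi scaleNr; apply.
have [d1 [d1_bd]] := hL (P + Q) ltac:(by right; left).
rewrite n1 linearD => E1.
have [d2 [d2_bd]] := hL (P - Q) ltac:(by left).
rewrite n2 linearB => E2.
have [d3 [d3_bd]] := hL (P + 'i *: Q) ltac:(by right; right; right).
rewrite n3 linearD linearZ => E3.
have [d4 [d4_bd]] := hL (P - 'i *: Q) ltac:(by right; right; left).
rewrite n4 linearB linearZ => E4.
have t4 : 4 * tdot (L P) (L Q) = 2 * ((d1 - d2)%:C + 'i * (d3 - d4)%:C).
  by rewrite tdot_polarization E1 E2 E3 E4 !rmorphB /=; ring.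
have d_bd : `|d1 - d2| + `|d3 - d4| <= 4 * del.
  move: d1_bd d2_bd d3_bd d4_bd => /andP[? ?] /andP[? ?] /andP[? ?] /andP[? ?].
  have : `|d1 - d2| <= 2 * del by rewrite ler_norml; apply/andP; split; lra.
  have : `|d3 - d4| <= 2 * del by rewrite ler_norml; apply/andP; split; lra.
  lra.
rewrite -(ler_pM2l (_ : 0 < 4)) // -[4]normr_nat -normrM t4 normrM !normr_nat.
apply: (@le_trans _ _ (2 * (`|d1 - d2| + `|d3 - d4|)%:C)).
  rewrite ler_wpM2l ?ler0n //; apply: le_trans (ler_normD _ _) _.
  by rewrite normrM normCi mul1r !normc_real rmorphD.
rewrite -!(rmorph_nat (real_complex R)) -!rmorphM lecR; lra.
Qed.

Lemma JL_orthogonal_sum (eps : R) (u v : {ffun I -> R[i]}) :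
  tdot u v = 0 -> JL (eps / 6) (fun x => x = u \/ x = v) ->
  `|tdot (L u) (L v)| <= (eps / 24)%:C * tnorm2 (u + v) ->
  `|tnorm2 (L (u + v)) - tnorm2 (u + v)| <= (eps / 4)%:C * tnorm2 (u + v).
Proof.
move=> uv hL cross.
have [e1 [e1_bd Lu]] := hL u (or_introl erefl).
have [e2 [e2_bd Lv]] := hL v (or_intror erefl).
have e_le (e : R) : - (eps / 6) < e < eps / 6 -> `|e%:C| <= (eps / 6)%:C.
  by move=> e_bd; rewrite normc_real lecR ltW // ltr_norml.
rewrite tnorm2D_orthogonal // linearD tnorm2D Lu Lv.
have -> : (1 + e1%:C) * tnorm2 u + (1 + e2%:C) * tnorm2 v
          + (tdot (L u) (L v) + (tdot (L u) (L v))^*) - (tnorm2 u + tnorm2 v)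
        = e1%:C * tnorm2 u + e2%:C * tnorm2 v
          + (tdot (L u) (L v) + (tdot (L u) (L v))^*) by ring.
set t := tdot (L u) (L v); rewrite tnorm2D_orthogonal // in cross.
have lift (x y : R) : x = y -> x%:C = y%:C :> R[i] by move->.
have cross2 : `|t + t^*| <= (eps / 12)%:C * (tnorm2 u + tnorm2 v).
  apply: le_trans (ler_normD _ _) _; rewrite normcJ.
  rewrite (lift (eps / 12) (eps / 24 + eps / 24)); last by field.
  by rewrite rmorphD mulrDl lerD.
rewrite (lift (eps / 4) (eps / 6 + eps / 12)) ?rmorphD /=; last by field.
rewrite mulrDl mulrDr; apply: le_trans (ler_normD _ _) _; apply: lerD => //.
apply: le_trans (ler_normD _ _) _; rewrite !normrM !(ger0_norm (tnorm2_ge0 _)).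
by apply: lerD; apply: ler_wpM2r; rewrite ?tnorm2_ge0 ?e_le.
Qed.

Variables (r : nat) (T : 'I_r -> {ffun I -> R[i]}) (X : {ffun I -> R[i]}).
Hypothesis hT : orthonormal_fam T.

Lemma JL_tdot_proj_perp_le (del : R) k :
  JL del (Sprime T X) ->
  `|tdot (L (proj_perp T X)) (L (T k))| <= tnorm (proj_perp T X) * (2 * del)%:C.
Proof.
move=> hL; set z := proj_perp T X; set s := tnorm z.
(* For z = 0 the tensor P of S' is the junk value 0^-1 *: 0 = 0; the bound is trivial. *)
have [z0|z_neq0] := eqVneq z 0.
  by rewrite /s z0 linear0 tdot0l normr0 /tnorm tnorm2E tdot0l sqrtC0 mul0r.
have s_ge0 : 0 <= s by rewrite sqrtC_ge0 tnorm2_ge0.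
have s_neq0 : s != 0.
  apply: contra_neq z_neq0 => s0; apply: tnorm2_eq0.
  by rewrite -[tnorm2 z]sqrtCK -/(tnorm z) -/s s0 expr0n.
set P := s^-1 *: z.
have P1 : tnorm2 P = 1.
  rewrite tnorm2Z ger0_norm ?invr_ge0 // -[tnorm2 z]sqrtCK -/(tnorm z) -/s.
  by rewrite -exprMn mulVf ?expr1n.
have PT : tdot P (T k) = 0 by rewrite tdotZl tdot_proj_perp // mulr0.
have hLPT :
    JL del (fun Z => Z = P - T k \/ Z = P + T k \/ Z = P - 'i *: T k \/ Z = P + 'i *: T k).
  by apply: JL_embeddingS hL => Z hZ; exists k.
rewrite -(scalerKV s_neq0 z) linearZ tdotZl normrM (ger0_norm s_ge0) -/P.
apply: (ler_wpM2l s_ge0).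
exact: JL_tdot_orthonormal_le P1 (tnorm2_orthonormal hT k) PT hLPT.
Qed.

Lemma JL_tdot_proj_perp_span_le (eps : R) (a : 'I_r -> R[i]) :
  0 <= eps -> JL (eps / (24 * Num.sqrt r%:R)) (Sprime T X) ->
  `|tdot (L (proj_perp T X)) (L (\sum_k a k *: T k))|
    <= (eps / 24)%:C * tnorm2 (proj_perp T X + \sum_k a k *: T k).
Proof.
move=> eps_ge0 hL.
set z := proj_perp T X; set s := tnorm z; set q := Num.sqrt (r%:R : R).
have s_ge0 : 0 <= s by rewrite sqrtC_ge0 tnorm2_ge0.
rewrite tnorm2D_orthogonal ?tdot_proj_perp_span // tnorm2_span //.
rewrite -[tnorm2 z]sqrtCK -/(tnorm z) -/s.
have per_k k : `|tdot (L z) (L (a k *: T k))| <= `|a k| * (s * (2 * (eps / (24 * q)))%:C).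
  rewrite linearZ tdotZr normrM normcJ.
  by apply: (ler_wpM2l (normr_ge0 _)); exact: JL_tdot_proj_perp_le.
apply: le_trans (_ : _ <= \sum_k `|a k| * (s * (2 * (eps / (24 * q)))%:C)) _.
  rewrite linear_sum tdot_sumr; apply: le_trans (ler_norm_sum _ _ _) _.
  exact: ler_sum.
have del_eq : (2 * (eps / (24 * q)))%:C = (eps / 24)%:C * 2 / q%:C.
  rewrite -(rmorph_nat (real_complex R) 2) -fmorphV -!rmorphM; congr (_%:C).
  by rewrite invfM; ring.
rewrite -mulr_suml del_eq.
rewrite [X in X <= _](_ : _ = (eps / 24)%:C * (2 * (s / q%:C) * \sum_k `|a k|)); last by ring.
apply: ler_wpM2l; first by rewrite ler0c divr_ge0.
apply: mean_sqr_sum_le => [|||k]; rewrite ?ler0c ?sqrtr_ge0 ?ger0_real ?normr_real //.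
by rewrite -rmorphXn sqr_sqrtr ?ler0n // rmorph_nat.
Qed.

End JLInnerProducts.

Lemma JL_distortion_compose (R : realType) (eps e : R) (M N : R[i]) :
  eps <= 1 -> - (eps / 3) < e < eps / 3 -> 0 <= N ->
  `|M - N| <= (eps / 4)%:C * N -> `|(1 + e%:C) * M - N| <= eps%:C * N.
Proof.
move=> eps_le1 e_bd N_ge0 MN; have eps_ge0 : 0 <= eps by case/andP: e_bd; lra.
have e_le : `|e%:C| <= (eps / 3)%:C by rewrite normc_real lecR ltW // ltr_norml.
have M_le : `|M| <= (1 + eps / 4)%:C * N.
  rewrite rmorphD rmorph1 mulrDl mul1r addrC -[M](subrK N).
  by apply: le_trans (ler_normD _ _) _; rewrite (ger0_norm N_ge0) lerD.
have -> : (1 + e%:C) * M - N = e%:C * M + (M - N) by ring.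
apply: le_trans (ler_normD _ _) _; rewrite normrM.
apply: le_trans (lerD (ler_pM _ _ e_le M_le) MN) _; rewrite ?normr_ge0 //.
by rewrite mulrA -mulrDl ler_wpM2r // -!rmorphM -rmorphD lecR; nra.
Qed.

Theorem theorem5 (R : realType) (d : nat) (n : 'I_d -> nat)
    (d' : nat) (ms : 'I_d' -> nat) (r m : nat)
    (X : tensor R n) (T : 'I_r -> tensor R n) (hT : orthonormal_fam T)
    (eps : R) (heps : 0 < eps < 1)
    (L : {linear tensor R n -> tensor R ms})
    (h1 : JL_embedding (@tnorm2 R _) (@tnorm2 R _) L (eps / 6)
            (fun Y => span_of T Y \/ Y = proj_perp T X))
    (h2 : JL_embedding (@tnorm2 R _) (@tnorm2 R _) L
            (eps / (24 * Num.sqrt (r%:R)))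
            (Sprime T X))
    (e : 'I_(\prod_(l < d') ms l) -> tindex ms) (he : bijective e)
    (A : 'M[R[i]]_(m, \prod_(l < d') ms l))
    (h3 : JL_embedding (@vnorm2 R _) (@vnorm2 R _) (fun v => A *m v) (eps / 3)
            (span_of1 (vect e (L (proj_perp T X))) (fun k => vect e (L (T k))))) :
  forall Y : tensor R n, span_of T Y ->
    `| vnorm2 (A *m vect e (L (X - Y))) - tnorm2 (X - Y) |
      <= eps%:C * tnorm2 (X - Y).
Proof.
move=> _ [c ->]; case/andP: heps => eps_gt0 eps_lt1.
set z := proj_perp T X; pose a k := tdot X (T k) - c k.
rewrite (sub_span_proj_perp T X c : _ = z + \sum_k a k *: T k).
have Lzw_span : span_of1 (vect e (L z)) (fun k => vect e (L (T k)))
                        (vect e (L (z + \sum_k a k *: T k))).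
  exists 1, a; rewrite scale1r !linearD !linear_sum; congr (_ + _).
  by apply: eq_bigr => k _; rewrite !linearZ.
have [e3 [e3_bd ->]] := h3 _ Lzw_span; rewrite vnorm2_vect //.
apply: JL_distortion_compose (ltW eps_lt1) e3_bd (tnorm2_ge0 _) _.
apply: JL_orthogonal_sum; first exact: tdot_proj_perp_span.
  by apply: JL_embeddingS h1 => Z [->|->]; [right | left; exists a].
exact (JL_tdot_proj_perp_span_le hT a (ltW eps_gt0) h2).
Qed.
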